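(* Let $G$ be a virtually abelian group and let $H\le G$ be a finite-index normal subgroup with $H\cong\mathbb{Z}^n$. Then there exists a finite generating set $S$ of $G$ (with $S=S^{-1}$, $e\notin S$) such that $\kappa(h)=0$ for every $h\in H\smallsetminus\{e\}$, where $\kappa$ is computed with respect to $S$.
   Context: For a group $G$ with finite generating set $S$ ($S=S^{-1}$, $e\notin S$), $|x|$ denotes the word length of $x\in G$ with respect to $S$. For $g\in G$ define $\mathrm{Av}(g)=\frac{1}{|S|}\sum_{a\in S}|a^{-1}ga|$, and for $g\neq e$ define the curvature $\kappa(g)=\frac{|g|-\mathrm{Av}(g)}{|g|}$. *)

From HB Require Import structures.
From mathcomp Require Import all_boot all_order all_algebra.
From mathcomp Require Import boolp.
From Stdlib Require List.
Set Implicit Arguments. Unset Strict Implicit. Unset Printing Implicit Defensive.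
Import Order.TTheory GRing.Theory Num.Theory.

Record group := Group {
  gcar :> Type;
  gmul : gcar -> gcar -> gcar;
  ginv : gcar -> gcar;
  gone : gcar;
  gmulA : forall x y z, gmul x (gmul y z) = gmul (gmul x y) z;
  gmul1 : forall x, gmul gone x = x;
  gmulV : forall x, gmul (ginv x) x = gone
}.

Section Defs.
Variable G : group.

Definition gprod (l : seq G) : G := foldr (@gmul G) (gone G) l.

Definition has_word (S : seq G) (x : G) (n : nat) : Prop :=
  exists l : seq G, [/\ List.Forall (fun a => List.In a S) l, size l = n & gprod l = x].

(* S is a finite generating set with S = S^-1 and e notin S
   (finite: S is a duplicate-free list) *)
Definition sym_gen_set (S : seq G) : Prop :=
  [/\ List.NoDup S,
      ~ List.In (gone G) S,
      (forall a, List.In a S -> List.In (ginv a) S) &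
      (forall x : G, exists n, has_word S x n)].

Definition wordlen (S : seq G) (x : G) : nat :=
  match pselect (exists n, `[< has_word S x n >]) with
  | left e => ex_minn e
  | right _ => 0%N
  end.

Local Open Scope ring_scope.

Definition Av (S : seq G) (g : G) : rat :=
  (\sum_(a <- S) (wordlen S (gmul (gmul (ginv a) g) a))%:R) / (size S)%:R.

Definition kappa (S : seq G) (g : G) : rat :=
  ((wordlen S g)%:R - Av S g) / (wordlen S g)%:R.

Definition subgroup (H : G -> Prop) : Prop :=
  [/\ H (gone G), (forall x y, H x -> H y -> H (gmul x y)) & (forall x, H x -> H (ginv x))].

Definition normal (H : G -> Prop) : Prop :=
  forall g h, H h -> H (gmul (gmul (ginv g) h) g).

Definition finite_index (H : G -> Prop) : Prop :=
  exists reps : seq G, forall x : G, exists2 r, List.In r reps & H (gmul (ginv r) x).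

Definition iso_Zn (H : G -> Prop) (n : nat) : Prop :=
  exists phi : 'rV[int]_n -> G,
    [/\ injective phi,
        (forall u v, phi (u + v) = gmul (phi u) (phi v)),
        (forall u, H (phi u)) &
        (forall h, H h -> exists u, phi u = h)].

End Defs.

From HB Require Import structures.
From mathcomp Require Import all_boot all_order all_algebra.
From mathcomp Require Import boolp.
From Stdlib Require List.
Import Order.TTheory GRing.Theory Num.Theory.
Set Implicit Arguments. Unset Strict Implicit. Unset Printing Implicit Defensive.

(* Let R be a finite transversal of the cosets x H and rho(x) the representative
   of x H in R. Since H is abelian and normal, conjugation by g on H only
   depends on the coset of g, so the R-conjugates of a finite subset of H form
   a finite set that is invariant under conjugation by all of G. Take for S the
   elements of R, their inverses, and the R-conjugates of a finite generating
   set of H, of the Schreier generators r s rho(r s)^-1 (r in R, s in R or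
   R^-1) and of their inverses. Given a word s_1 ... s_k over S for h in H and
   g in G, put y_i = g^-1 s_1 ... s_i; the Schreier rewriting
   t_i = rho(y_(i-1)) s_i rho(y_i)^-1 is either e, a Schreier generator or a
   conjugate of s_i, hence in S or trivial, and t_1 ... t_k equals
   rho(g^-1) h rho(g^-1)^-1 = g^-1 h g. So |g^-1 h g| <= |h| for all g, with
   equality by symmetry, hence Av(h) = |h| and kappa(h) = 0. *)

Lemma In_mem (T : eqType) (x : T) (s : seq T) : x \in s -> List.In x s.
Proof. by elim: s => //= y s IH; rewrite in_cons => /orP [/eqP ->|/IH]; [left | right]. Qed.

Lemma Forall_cat (T : Type) (P : T -> Prop) (s1 s2 : seq T) :
  List.Forall P s1 -> List.Forall P s2 -> List.Forall P (s1 ++ s2).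
Proof. by move=> h1 h2; elim: h1 => //= a s Pa _ IH; constructor. Qed.

Lemma NoDup_filter_exists (T : Type) (s : seq T) (P : T -> Prop) :
  exists s', List.NoDup s' /\ forall x, List.In x s' <-> List.In x s /\ P x.
Proof.
elim: s => [|a s [s' [nd_s' mem_s']]].
  by exists nil; split; [constructor | move=> x; split => //= [[]]].
case: (pselect (P a /\ ~ List.In a s')) => [[Pa a_new]|a_old].
  exists (a :: s'); split; first by constructor.
  move=> x /=; split; first by case=> [<-|/mem_s' []]; tauto.
  by case=> [[<-|xs] Px]; [left | right; apply/mem_s'].
exists s'; split => // x; split; first by move/mem_s' => []; split => //; right.
case=> [[<-|xs] Px]; last exact/mem_s'.
by case: (pselect (List.In a s')) => // ?; case: a_old.
Qed.

Section Words.
Variable G : group.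
Local Notation "x ** y" := (@gmul G x y) (at level 40, left associativity).
Local Notation "x ^-1" := (@ginv G x).
Local Notation e := (gone G).
Implicit Types (a b x y : G) (S T : seq G).

Lemma gmulxV x : x ** x^-1 = e.
Proof.
have h : x^-1^-1 ** x^-1 = e by apply: gmulV.
by rewrite -[x ** x^-1]gmul1 -h -gmulA (gmulA x^-1) gmulV gmul1.
Qed.

Lemma gmulx1 x : x ** e = x.
Proof. by rewrite -(gmulV x) gmulA gmulxV gmul1. Qed.

Lemma gmulI x : injective (gmul x).
Proof. by move=> y z h; rewrite -(gmul1 y) -(gmul1 z) -(gmulV x) -!gmulA h. Qed.

Lemma ginvK x : x^-1^-1 = x.
Proof. by apply: (@gmulI x^-1); rewrite gmulxV gmulV. Qed.

Lemma ginvM x y : (x ** y)^-1 = y^-1 ** x^-1.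
Proof. by apply: (@gmulI (x ** y)); rewrite gmulxV gmulA -(gmulA x) gmulxV gmulx1 gmulxV. Qed.

Lemma ginv1 : e^-1 = e.
Proof. by rewrite -{2}(gmulV e) gmulx1. Qed.

Lemma ginv_eq1 x : x^-1 = e -> x = e.
Proof. by move=> h; rewrite -(ginvK x) h ginv1. Qed.

Definition gconj a x := a^-1 ** x ** a.

Lemma gconjM a b x : gconj (a ** b) x = gconj b (gconj a x).
Proof. by rewrite /gconj ginvM !gmulA. Qed.

Lemma gconj_comm a x : x ** a = a ** x -> gconj a x = x.
Proof. by move=> h; rewrite /gconj -gmulA h gmulA gmulV gmul1. Qed.

Lemma gconjK a x : gconj a^-1 (gconj a x) = x.
Proof. by rewrite -gconjM gmulxV gconj_comm // gmulx1 gmul1. Qed.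

Lemma gconjV a x : (gconj a x)^-1 = gconj a x^-1.
Proof. by rewrite /gconj !ginvM ginvK gmulA. Qed.

Lemma gconj_eq1 a x : gconj a x = e -> x = e.
Proof. by move=> h; rewrite -(gconjK a x) h gconj_comm // gmulx1 gmul1. Qed.

Lemma gprod_cat S T : gprod (S ++ T) = gprod S ** gprod T.
Proof. by elim: S => [|a S IH] /=; rewrite ?gmul1 // /gprod /= -/(gprod _) IH gmulA. Qed.

Definition generated S x := exists k, has_word S x k.

Lemma has_word_nil S : has_word S e 0.
Proof. by exists nil. Qed.

Lemma has_word_letter S a : List.In a S -> has_word S a 1.
Proof. by exists [:: a]; split; [constructor | | rewrite /gprod /= gmulx1]. Qed.

Lemma has_word_mul S x y k m :
  has_word S x k -> has_word S y m -> has_word S (x ** y) (k + m).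
Proof.
move=> [u [Su <- <-]] [v [Sv <- <-]].
by exists (u ++ v); rewrite size_cat gprod_cat; split => //; apply: Forall_cat.
Qed.

Lemma generated1 S : generated S e.
Proof. by exists 0%N; apply: has_word_nil. Qed.

Lemma generated_letter S a : List.In a S -> generated S a.
Proof. by exists 1%N; apply: has_word_letter. Qed.

Lemma generated_mul S x y : generated S x -> generated S y -> generated S (x ** y).
Proof. by move=> [k hx] [m hy]; exists (k + m); apply: has_word_mul. Qed.

Lemma generated_trans S T x :
  (forall a, List.In a T -> generated S a) -> generated T x -> generated S x.
Proof.
move=> TS [_ [w [Tw _ <-]]]; elim: Tw => [|a u Ta _ IH]; first exact: generated1.
exact: generated_mul (TS a Ta) IH.
Qed.

Lemma wordlen_le S x k : has_word S x k -> (wordlen S x <= k)%N.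
Proof.
move=> hk; rewrite /wordlen; case: pselect => // ex.
by case: ex_minnP => m _; apply; apply/asboolP.
Qed.

Lemma has_word_wordlen S x : generated S x -> has_word S x (wordlen S x).
Proof.
move=> [k hk]; rewrite /wordlen; case: pselect => [ex|[]]; last by exists k; apply/asboolP.
by case: ex_minnP => m /asboolP.
Qed.

Lemma wordlen_nil x : wordlen [::] x = 0%N.
Proof.
rewrite /wordlen; case: pselect => // ex; case: ex_minnP => m /asboolP [w [nil_w <- _]] _.
by case: nil_w => // a _ [].
Qed.

Local Open Scope ring_scope.

(* For S = [::] the word length is the junk value 0, so kappa is 0 / 0 = 0. *)
Lemma kappa_eq0 S x :
  (forall a, wordlen S (gconj a x) = wordlen S x) -> kappa S x = 0.
Proof.
move=> conj_inv; rewrite /kappa /Av.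
under eq_bigr => a _ do rewrite -/(gconj a x) conj_inv.
rewrite big_const_seq count_predT iter_addr_0.
case: S conj_inv => [|a S] _; first by rewrite wordlen_nil invr0 mulr0.
set w := (wordlen _ x)%:R.
by rewrite -(mulr_natr w) mulfK ?pnatr_eq0 // subrr mul0r.
Qed.

End Words.

Section Transversal.
Variables (G : group) (H : G -> Prop) (R : seq G).
Local Notation "x ** y" := (@gmul G x y) (at level 40, left associativity).
Local Notation "x ^-1" := (@ginv G x).
Local Notation e := (gone G).
Hypotheses (HM : forall x y, H x -> H y -> H (x ** y)) (HV : forall x, H x -> H x^-1).
Hypothesis HR : forall x : G, exists2 r, List.In r R & H (r^-1 ** x).

Definition rho (x : G) : G :=
  if List.find (fun r => `[< H (r^-1 ** x) >]) R is Some r then r else e.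

Lemma rho_spec x : List.In (rho x) R /\ H ((rho x)^-1 ** x).
Proof.
rewrite /rho; case E: List.find => [r|].
  by have [Rr /asboolP] := List.find_some _ _ E.
have [r Rr Hr] := HR x.
by have := List.find_none _ _ E _ Rr; rewrite asboolT.
Qed.

Lemma In_rho x : List.In (rho x) R.
Proof. exact: (rho_spec x).1. Qed.

Lemma H_rhoV_mul x : H ((rho x)^-1 ** x).
Proof. exact: (rho_spec x).2. Qed.

Lemma rho_coset x y : H (x^-1 ** y) -> rho x = rho y.
Proof.
move=> Hxy; rewrite /rho; congr (if List.find _ R is Some r then r else e).
apply: funext => r; apply/asboolP/asboolP => Hr.
  by have := HM Hr Hxy; rewrite -!gmulA (gmulA x) gmulxV gmul1.
by have := HM Hr (HV Hxy); rewrite ginvM ginvK -!gmulA (gmulA y) gmulxV gmul1.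
Qed.

End Transversal.

Section Schreier.
Variables (G : group) (H : G -> Prop) (R B : seq G).
Local Notation "x ** y" := (@gmul G x y) (at level 40, left associativity).
Local Notation "x ^-1" := (@ginv G x).
Local Notation e := (gone G).
Hypotheses (HM : forall x y, H x -> H y -> H (x ** y)) (HV : forall x, H x -> H x^-1).
Hypothesis HN : normal H.
Hypothesis HR : forall x : G, exists2 r, List.In r R & H (r^-1 ** x).
Hypothesis Hcomm : forall x y, H x -> H y -> x ** y = y ** x.
Hypotheses (BH : forall b, List.In b B -> H b) (genB : forall h, H h -> generated B h).

Local Notation rho := (rho H R).

Lemma H_mul_rhoV x : H (x ** (rho x)^-1).
Proof.
by have := HN (rho x)^-1 (H_rhoV_mul HR x); rewrite /gconj ginvK !gmulA gmulxV gmul1.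
Qed.

Lemma gconj_coset a b h : H h -> H (a ** b^-1) -> gconj a h = gconj b h.
Proof.
move=> Hh Hab; rewrite -[a]gmulx1 -(gmulV b) gmulA gconjM (gconj_comm (x := h)) //.
exact: Hcomm.
Qed.

Definition symmetrize (s : seq G) : seq G := List.app s (List.map (@ginv G) s).

Lemma symmetrize_inv s a : List.In a (symmetrize s) -> List.In a^-1 (symmetrize s).
Proof.
rewrite !List.in_app_iff !List.in_map_iff.
by case=> [sa|[b [<- sb]]]; [right; exists a | left; rewrite ginvK].
Qed.

Lemma symmetrize_H s a :
  (forall x, List.In x s -> H x) -> List.In a (symmetrize s) -> H a.
Proof.
by move=> sH; rewrite List.in_app_iff List.in_map_iff => -[/sH|[b [<- /sH/HV]]].
Qed.

Definition conj_closure (s : seq G) : seq G :=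
  List.flat_map (fun r => List.map (gconj r) s) R.

Lemma conj_closureP s x :
  List.In x (conj_closure s) <-> exists2 r, List.In r R & exists2 y, List.In y s & x = gconj r y.
Proof.
rewrite List.in_flat_map; split.
  by move=> [r [Rr /List.in_map_iff [y [<- sy]]]]; exists r => //; exists y.
by move=> [r Rr [y sy ->]]; exists r; split => //; apply/List.in_map_iff; exists y.
Qed.

Section ConjClosure.
Variable s : seq G.
Hypothesis sH : forall x, List.In x s -> H x.

Lemma conj_closure_H x : List.In x (conj_closure s) -> H x.
Proof. by move/conj_closureP => [r _ [y /sH Hy ->]]; apply: HN. Qed.

Lemma conj_closure_self y : List.In y s -> List.In y (conj_closure s).
Proof.
move=> sy; apply/conj_closureP; exists (rho e); first exact: In_rho.
exists y => //; rewrite gconj_comm //; apply: Hcomm; first exact: sH.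
by have := HV (H_rhoV_mul HR e); rewrite ginvM ginvK ginv1 gmul1.
Qed.

Lemma conj_closure_gconj g x :
  List.In x (conj_closure s) -> List.In (gconj g x) (conj_closure s).
Proof.
move/conj_closureP => [r _ [y sy ->]]; apply/conj_closureP.
exists (rho (r ** g)); first exact: In_rho.
by exists y => //; rewrite -gconjM; apply: gconj_coset; [apply: sH | apply: H_mul_rhoV].
Qed.

End ConjClosure.

Definition schreier_gens : seq G :=
  List.flat_map (fun r => List.map (fun s => r ** s ** (rho (r ** s))^-1) (symmetrize R)) R.

Lemma schreier_gensP t :
  List.In t schreier_gens <->
  exists2 r, List.In r R & exists2 s, List.In s (symmetrize R) & t = r ** s ** (rho (r ** s))^-1.
Proof.
rewrite List.in_flat_map; split.
  by move=> [r [Rr /List.in_map_iff [s [<- Rs]]]]; exists r => //; exists s.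
by move=> [r Rr [s Rs ->]]; exists r; split => //; apply/List.in_map_iff; exists s.
Qed.

Definition H_gens : seq G := symmetrize (List.app schreier_gens B).

Lemma H_gens_H x : List.In x H_gens -> H x.
Proof.
apply: symmetrize_H => y /List.in_app_iff [/schreier_gensP [r _ [s _ ->]]|/BH //].
exact: H_mul_rhoV.
Qed.

Definition schreier_set : seq G := List.app (conj_closure H_gens) (symmetrize R).

Lemma schreier_set_inv a : List.In a schreier_set -> List.In a^-1 schreier_set.
Proof.
case/List.in_app_iff=> [/conj_closureP [r Rr [y /symmetrize_inv Vy_in ->]]|/symmetrize_inv Ra];
  apply/List.in_app_iff; [left | by right].
by rewrite gconjV; apply/conj_closureP; exists r => //; exists y^-1.
Qed.

Section GeneratingSet.
Variable S : seq G.
Hypothesis HS : forall x, List.In x S <-> List.In x schreier_set /\ x <> e.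

Lemma generated_schreier_set a : List.In a schreier_set -> generated S a.
Proof.
move=> a_in; case: (pselect (a = e)) => [->|a_ne1]; first exact: generated1.
exact/generated_letter/HS.
Qed.

Lemma generated_all x : generated S x.
Proof.
have -> : x = rho x ** ((rho x)^-1 ** x) by rewrite gmulA gmulxV gmul1.
apply: generated_mul.
  by apply/generated_schreier_set/List.in_app_iff; right; apply/List.in_app_iff; left; apply: In_rho.
apply: generated_trans (genB (H_rhoV_mul HR x)) => b Bb.
apply/generated_schreier_set/List.in_app_iff; left; apply/conj_closure_self; first exact: H_gens_H.
by apply/List.in_app_iff; left; apply/List.in_app_iff; right.
Qed.

Lemma schreier_step y s :
  List.In s S -> let t := rho y ** s ** (rho (y ** s))^-1 in t = e \/ List.In t S.
Proof.
move=> /HS [/List.in_app_iff [s_in|Rs] s_ne1] t.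
  have Hs := conj_closure_H H_gens_H s_in.
  have t_conj : t = gconj (rho y)^-1 s.
    rewrite /t /gconj ginvK; congr (_ ** _ ** _^-1); symmetry.
    by apply: rho_coset => //; rewrite gmulA gmulV gmul1.
  right; apply/HS; split; last by rewrite t_conj => /gconj_eq1.
  by apply/List.in_app_iff; left; rewrite t_conj; apply: conj_closure_gconj => //; exact: H_gens_H.
have rho_ys : rho (y ** s) = rho (rho y ** s).
  symmetry; apply: rho_coset => //; rewrite ginvM -!gmulA (gmulA _ y s) gmulA.
  exact: HN (H_rhoV_mul HR y).
case: (pselect (t = e)) => [|t_ne1]; [by left | right; apply/HS; split => //].
apply/List.in_app_iff; left; apply: conj_closure_self; first exact: H_gens_H.
apply/List.in_app_iff; left; apply/List.in_app_iff; left; apply/schreier_gensP.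
by exists (rho y); [exact: In_rho | exists s; rewrite // /t rho_ys].
Qed.

Lemma has_word_schreier_rewrite y x m :
  has_word S x m ->
  exists2 k, (k <= m)%N & has_word S (rho y ** x ** (rho (y ** x))^-1) k.
Proof.
move=> [w [Sw <- <-]] {x m}; elim: Sw y => {w} [|s w Ss _ IH] y.
  by exists 0%N => //; rewrite /gprod /= !gmulx1 gmulxV; apply: has_word_nil.
have [k le_km hk] := IH (y ** s).
have -> : rho y ** gprod (s :: w) ** (rho (y ** gprod (s :: w)))^-1 =
    (rho y ** s ** (rho (y ** s))^-1) ** (rho (y ** s) ** gprod w ** (rho (y ** s ** gprod w))^-1).
  by rewrite /gprod /= -/(gprod w) !gmulA -(gmulA _ (rho (y ** s))^-1) gmulV gmulx1.
case: (schreier_step y Ss) => [->|tS]; first by exists k; rewrite ?gmul1 // leqW.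
by exists k.+1 => //; apply: has_word_mul (has_word_letter tS) hk.
Qed.

Lemma wordlen_gconj_le g h : H h -> (wordlen S (gconj g h) <= wordlen S h)%N.
Proof.
move=> Hh; have [k le_k hk] :=
  has_word_schreier_rewrite g^-1 (has_word_wordlen (generated_all h)).
apply: leq_trans (wordlen_le _) le_k; congr (has_word S _ k): hk.
have -> : rho (g^-1 ** h) = rho g^-1.
  by symmetry; apply: rho_coset => //; rewrite gmulA gmulV gmul1.
rewrite (gconj_coset (b := (rho g^-1)^-1)) ?ginvK //; first by rewrite /gconj ginvK.
by have := HV (H_rhoV_mul HR g^-1); rewrite ginvM !ginvK.
Qed.

Lemma wordlen_gconj g h : H h -> wordlen S (gconj g h) = wordlen S h.
Proof.
move=> Hh; apply/eqP; rewrite eqn_leq wordlen_gconj_le //=.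
by rewrite -{1}(gconjK g h); apply: wordlen_gconj_le; apply: HN.
Qed.

Lemma schreier_sym_gen_set : List.NoDup S -> sym_gen_set S.
Proof.
move=> nodupS; split => //; last exact: generated_all.
  by case/HS.
move=> a /HS [a_in a_ne1]; apply/HS; split; [exact: schreier_set_inv | by move/ginv_eq1].
Qed.

End GeneratingSet.

Lemma exists_gen_set_wordlen_gconj :
  exists S, sym_gen_set S /\ forall g h, H h -> wordlen S (gconj g h) = wordlen S h.
Proof.
have [S [nodupS HS]] := NoDup_filter_exists schreier_set (fun x => x <> e).
exists S; split; first exact: schreier_sym_gen_set.
by move=> g h; apply: wordlen_gconj.
Qed.

End Schreier.

Section FreeAbelian.
Variables (G : group) (n : nat) (phi : 'rV[int]_n -> G).
Local Notation "x ** y" := (@gmul G x y) (at level 40, left associativity).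
Local Notation e := (gone G).
Local Open Scope ring_scope.
Hypothesis phiD : forall u v, phi (u + v) = phi u ** phi v.

Lemma phi0 : phi 0 = e.
Proof. by apply: (@gmulI _ (phi 0)); rewrite gmulx1 -phiD addr0. Qed.

Lemma phi_comm u v : phi u ** phi v = phi v ** phi u.
Proof. by rewrite -!phiD addrC. Qed.

Definition unit_images : seq G :=
  List.flat_map (fun i => [:: phi (delta_mx 0 i); phi (- delta_mx 0 i)]) (enum 'I_n).

Lemma generated_unit_images u : generated unit_images (phi u).
Proof.
have gen_muln d m : List.In (phi d) unit_images -> generated unit_images (phi (d *+ m)).
  move=> unit_d; elim: m => [|m IH]; first by rewrite mulr0n phi0; apply: generated1.
  by rewrite mulrS phiD; apply: generated_mul IH; apply: generated_letter.
rewrite [u]row_sum_delta; apply: (big_ind (fun v => generated unit_images (phi v))).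
- by rewrite phi0; apply: generated1.
- by move=> v w gen_v gen_w; rewrite phiD; apply: generated_mul.
move=> j _; have enum_j : List.In j (enum 'I_n) by apply/In_mem; rewrite mem_enum.
case: (u 0 j) => m.
  rewrite -natz scaler_nat; apply: gen_muln.
  by apply/List.in_flat_map; exists j; split => //; left.
rewrite NegzE scaleNr -natz scaler_nat -mulNrn; apply: gen_muln.
by apply/List.in_flat_map; exists j; split => //; right; left.
Qed.

End FreeAbelian.

Lemma iso_Zn_comm (G : group) (H : G -> Prop) (n : nat) :
  iso_Zn H n -> forall x y, H x -> H y -> gmul x y = gmul y x.
Proof.
by move=> [phi [_ phiD _ phiS]] x y /phiS [u <-] /phiS [v <-]; apply: phi_comm.
Qed.

Lemma iso_Zn_generated (G : group) (H : G -> Prop) (n : nat) :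
  iso_Zn H n ->
  exists2 B : seq G, (forall b, List.In b B -> H b) & forall h, H h -> generated B h.
Proof.
move=> [phi [_ phiD phiH phiS]]; exists (unit_images phi).
  by move=> b /List.in_flat_map [i [_ [<-|[<-|[]]]]].
by move=> h /phiS [u <-]; apply: generated_unit_images.
Qed.

Theorem mainTheorem2 (G : group) (H : G -> Prop) (n : nat) :
  subgroup H -> normal H -> finite_index H -> iso_Zn H n ->
  exists S : seq G, sym_gen_set S /\
    (forall h : G, H h -> h <> gone G -> kappa S h = 0%R).
Proof.
move=> [_ HM HV] HN [R HR] isoH.
have [B BH genB] := iso_Zn_generated isoH.
have [S [genS wordlen_gconjS]] :=
  exists_gen_set_wordlen_gconj HM HV HN HR (iso_Zn_comm isoH) BH genB.
exists S; split => // h Hh _.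
by apply: kappa_eq0 => a; apply: wordlen_gconjS.
Qed.
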